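(* Let $\mathcal{A}$ be an alternative $W^{*}$-factor, $\mathcal{B}$ an alternative complex $\ast$-algebra, and $\Phi:\mathcal{A}\to\mathcal{B}$ a bijection preserving product $ab+ba^{*}$ (resp. $ab-ba^{*}$). Let $p_{1}\in\mathcal{A}$ be a projection with $p_{1}\neq 1_{\mathcal{A}}$, $p_{2}=1_{\mathcal{A}}-p_{1}$, and $\mathcal{A}_{ij}=p_{i}\mathcal{A}p_{j}$. Then for all $a_{11}\in\mathcal{A}_{11}$, $b_{12}\in\mathcal{A}_{12}$, $c_{21}\in\mathcal{A}_{21}$, $d_{22}\in\mathcal{A}_{22}$: (i) $\Phi(a_{11}+b_{12}+c_{21})=\Phi(a_{11})+\Phi(b_{12})+\Phi(c_{21})$; (ii) $\Phi(b_{12}+c_{21}+d_{22})=\Phi(b_{12})+\Phi(c_{21})+\Phi(d_{22})$.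
   Context: An alternative $W^{*}$-factor is a prime alternative $C^{*}$-algebra (complete normed alternative complex $\ast$-algebra with $\|a^{*}a\|=\|a\|^{2}$) that is a dual Banach space; it is unital. A projection is a nonzero self-adjoint idempotent. $\mathcal{A}_{ij}$ are the Peirce components with respect to $p_{1}$. $\Phi$ preserves product $ab+ba^{*}$ (resp. $ab-ba^{*}$) if $\Phi(ab+ba^{*})=\Phi(a)\Phi(b)+\Phi(b)\Phi(a)^{*}$ (resp. $\Phi(ab-ba^{*})=\Phi(a)\Phi(b)-\Phi(b)\Phi(a)^{*}$) for all $a,b\in\mathcal{A}$. *)

From HB Require Import structures.
From mathcomp Require Import all_boot all_order all_algebra.
From mathcomp Require Import complex.
From mathcomp Require Import Rstruct.

Set Implicit Arguments.
Unset Strict Implicit.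
Unset Printing Implicit Defensive.

Import Order.TTheory GRing.Theory Num.Theory.
Local Open Scope ring_scope.

Definition CC : numClosedFieldType := (Rdefinitions.R)[i].

Section AltAlg.
Variable (A : lmodType CC) (mul : A -> A -> A) (star : A -> A).

Definition bilinear_mul : Prop :=
  (forall (k : CC) (a b c : A), mul (k *: a + b) c = k *: mul a c + mul b c) /\
  (forall (k : CC) (a b c : A), mul a (k *: b + c) = k *: mul a b + mul a c).

Definition alternative_mul : Prop :=
  (forall a b : A, mul (mul a a) b = mul a (mul a b)) /\
  (forall a b : A, mul (mul b a) a = mul b (mul a a)).

Definition is_involution : Prop :=
  (forall (k : CC) (a b : A), star (k *: a + b) = (Num.conj k) *: star a + star b) /\
  (forall a : A, star (star a) = a) /\
  (forall a b : A, star (mul a b) = mul (star b) (star a)).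

Definition alt_star_algebra : Prop :=
  [/\ bilinear_mul, alternative_mul & is_involution].

Definition is_ideal (I : A -> Prop) : Prop :=
  [/\ I 0,
      (forall (k : CC) (a b : A), I a -> I b -> I (k *: a + b)) &
      (forall a x : A, I a -> I (mul a x) /\ I (mul x a))].

Definition prime_alg : Prop :=
  forall I J : A -> Prop, is_ideal I -> is_ideal J ->
    (forall i j, I i -> J j -> mul i j = 0) ->
    (forall i, I i -> i = 0) \/ (forall j, J j -> j = 0).

Definition is_unit (one : A) : Prop :=
  forall a : A, mul one a = a /\ mul a one = a.

Definition is_projection (p : A) : Prop :=
  [/\ p <> 0, star p = p & mul p p = p].

End AltAlg.

(** * Norms (real-valued, encoded as nonnegative elements of CC) *)
Definition is_norm (X : lmodType CC) (nrm : X -> CC) : Prop :=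
  [/\ forall x, 0 <= nrm x,
      forall x, nrm x = 0 -> x = 0,
      forall (k : CC) x, nrm (k *: x) = `|k| * nrm x &
      forall x y, nrm (x + y) <= nrm x + nrm y].

Definition complete_for (X : lmodType CC) (nrm : X -> CC) : Prop :=
  forall u : nat -> X,
    (forall e : CC, 0 < e -> exists N : nat, forall m n : nat, (N <= m)%N -> (N <= n)%N ->
        nrm (u m - u n) < e) ->
    exists l : X, forall e : CC, 0 < e -> exists N : nat, forall n : nat, (N <= n)%N ->
        nrm (u n - l) < e.

Definition is_lub (S : CC -> Prop) (s : CC) : Prop :=
  (forall y, S y -> y <= s) /\ (forall z, (forall y, S y -> y <= z) -> s <= z).

(* A (with norm nrm) is a dual Banach space: it is isometrically linearly
   isomorphic to the dual X* (bounded linear functionals with the operator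
   norm) of some normed complex space X. *)
Definition dual_banach (A : lmodType CC) (nrm : A -> CC) : Prop :=
  exists (X : lmodType CC) (nX : X -> CC) (T : A -> X -> CC),
    [/\ is_norm nX,
        (forall (k : CC) a b x, T (k *: a + b) x = k * T a x + T b x),
        (forall a (k : CC) x y, T a (k *: x + y) = k * T a x + T a y),
        (forall a, is_lub (fun r => exists x, nX x <= 1 /\ r = `|T a x|) (nrm a)) &
        (forall f : X -> CC,
           (forall (k : CC) x y, f (k *: x + y) = k * f x + f y) ->
           (exists M : CC, forall x, `|f x| <= M * nX x) ->
           exists a, forall x, T a x = f x)].

Definition alt_Cstar_algebra (A : lmodType CC) (mul : A -> A -> A) (star : A -> A)
    (nrm : A -> CC) : Prop :=
  [/\ alt_star_algebra mul star, is_norm nrm, complete_for nrm,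
      (forall a b, nrm (mul a b) <= nrm a * nrm b) &
      (forall a, nrm (mul (star a) a) = nrm a ^+ 2)].

Definition alt_Wstar_factor (A : lmodType CC) (mul : A -> A -> A) (star : A -> A)
    (nrm : A -> CC) (one : A) : Prop :=
  [/\ alt_Cstar_algebra mul star nrm, prime_alg mul, dual_banach nrm & is_unit mul one].

Definition preserves_plus (A B : lmodType CC) (mulA : A -> A -> A) (starA : A -> A)
    (mulB : B -> B -> B) (starB : B -> B) (Phi : A -> B) : Prop :=
  forall a b, Phi (mulA a b + mulA b (starA a)) = mulB (Phi a) (Phi b) + mulB (Phi b) (starB (Phi a)).

Definition preserves_minus (A B : lmodType CC) (mulA : A -> A -> A) (starA : A -> A)
    (mulB : B -> B -> B) (starB : B -> B) (Phi : A -> B) : Prop :=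
  forall a b, Phi (mulA a b - mulA b (starA a)) = mulB (Phi a) (Phi b) - mulB (Phi b) (starB (Phi a)).

Definition peirce (A : lmodType CC) (mul : A -> A -> A) (pi pj x : A) : Prop :=
  exists a : A, x = mul (mul pi a) pj.

From HB Require Import structures.
From mathcomp Require Import all_boot all_order all_algebra.
From mathcomp Require Import complex.
Import Order.TTheory GRing.Theory Num.Theory.
Local Open Scope ring_scope.

Set Implicit Arguments.
Unset Strict Implicit.
Unset Printing Implicit Defensive.

(* Both products ab + b a^* and ab - b a^* are instances of the twisted product
   a o b := ab + e b a^*  with e = 1 resp. e = -1, and Phi preserves o.  In B the
   twisted product is biadditive, so whenever Phi t = Phi u + Phi v + Phi w we
   get Phi (t o x) = Phi (u o x) + Phi (v o x) + Phi (w o x) for every x, and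
   symmetrically on the other side.  Taking t := Phi^-1 (Phi u + Phi v + Phi w)
   and testing with the idempotents p_i and with l p_i + m p_j (scalars chosen
   so that o kills the off-diagonal Peirce spaces), injectivity of Phi pins
   down each Peirce component of t, and the Peirce decomposition gives
   t = u + v + w. *)

Section Bilinear.
Variables (V : lmodType CC) (mul : V -> V -> V).
Hypothesis hbil : bilinear_mul mul.

Lemma bmulDl a b c : mul (a + b) c = mul a c + mul b c.
Proof. by have := hbil.1 1 a b c; rewrite !scale1r. Qed.

Lemma bmulDr a b c : mul a (b + c) = mul a b + mul a c.
Proof. by have := hbil.2 1 a b c; rewrite !scale1r. Qed.

Lemma bmul0l c : mul 0 c = 0.
Proof. by apply: (addrI (mul 0 c)); rewrite -bmulDl !addr0. Qed.

Lemma bmul0r c : mul c 0 = 0.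
Proof. by apply: (addrI (mul c 0)); rewrite -bmulDr !addr0. Qed.

Lemma bmulZl k a c : mul (k *: a) c = k *: mul a c.
Proof. by have := hbil.1 k a 0 c; rewrite !addr0 bmul0l addr0. Qed.

Lemma bmulZr k a c : mul a (k *: c) = k *: mul a c.
Proof. by have := hbil.2 k a c 0; rewrite !addr0 bmul0r addr0. Qed.

Lemma bmulBl a b c : mul (a - b) c = mul a c - mul b c.
Proof. by rewrite bmulDl -scaleN1r bmulZl scaleN1r. Qed.

Lemma bmulBr a b c : mul a (b - c) = mul a b - mul a c.
Proof. by rewrite bmulDr -scaleN1r bmulZr scaleN1r. Qed.
End Bilinear.

Section Involution.
Variables (V : lmodType CC) (mul : V -> V -> V) (star : V -> V).
Hypothesis hinv : is_involution mul star.

Lemma starD a b : star (a + b) = star a + star b.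
Proof. by have := hinv.1 1 a b; rewrite !scale1r conjC1 scale1r. Qed.

Lemma star0 : star 0 = 0.
Proof. by apply: (addrI (star 0)); rewrite -starD !addr0. Qed.

Lemma starZ k a : star (k *: a) = Num.conj k *: star a.
Proof. by have := hinv.1 k a 0; rewrite !addr0 star0 addr0. Qed.

Lemma starN a : star (- a) = - star a.
Proof. by rewrite -scaleN1r starZ conjCN1 scaleN1r. Qed.

Lemma starK a : star (star a) = a. Proof. exact: hinv.2.1. Qed.

Lemma starM a b : star (mul a b) = mul (star b) (star a). Proof. exact: hinv.2.2. Qed.
End Involution.

(* The twisted product a o b = ab + e b a^*; for e = 1 and e = -1 it is the
   product ab + b a^* resp. ab - b a^* of the statement. *)
Definition tprod (V : lmodType CC) (mul : V -> V -> V) (star : V -> V) (e : CC)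
    (a b : V) : V :=
  mul a b + e *: mul b (star a).

Section TwistedProduct.
Variables (V : lmodType CC) (mul : V -> V -> V) (star : V -> V) (e : CC).
Hypothesis hbil : bilinear_mul mul.
Hypothesis hinv : is_involution mul star.
Local Notation tp := (tprod mul star e).

Lemma tprodDr x u v : tp x (u + v) = tp x u + tp x v.
Proof. by rewrite /tprod (bmulDl hbil) (bmulDr hbil) scalerDr addrACA. Qed.

Lemma tprodDl u v x : tp (u + v) x = tp u x + tp v x.
Proof.
by rewrite /tprod (bmulDl hbil) (starD hinv) (bmulDr hbil) scalerDr addrACA.
Qed.

Lemma tprod0l x : tp 0 x = 0.
Proof. by rewrite /tprod (star0 hinv) (bmul0l hbil) (bmul0r hbil) scaler0 addr0. Qed.

Lemma tprod0r x : tp x 0 = 0.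
Proof. by rewrite /tprod (bmul0l hbil) (bmul0r hbil) scaler0 addr0. Qed.
End TwistedProduct.

Lemma preserves_tprod (A B : lmodType CC) (mulA : A -> A -> A) (starA : A -> A)
    (mulB : B -> B -> B) (starB : B -> B) (Phi : A -> B) :
  preserves_plus mulA starA mulB starB Phi \/
  preserves_minus mulA starA mulB starB Phi ->
  exists2 e : CC, e = 1 \/ e = -1 &
    forall a b, Phi (tprod mulA starA e a b) = tprod mulB starB e (Phi a) (Phi b).
Proof.
case=> hpres; [exists 1; first by left | exists (-1); first by right].
  by move=> a b; rewrite /tprod !scale1r; exact: hpres.
by move=> a b; rewrite /tprod !scaleN1r; exact: hpres.
Qed.

(* For e = +-1 there are scalars l, m with l + e m^* = m + e l^* = 0 while
   l + e l^* and m + e m^* are nonzero: the element l p_i + m p_j then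
   annihilates the off-diagonal Peirce spaces under the twisted product but
   acts invertibly on the diagonal ones. *)
Lemma separating_scalars (e : CC) : e = 1 \/ e = -1 ->
  exists l m : CC, [/\ l + e * Num.conj m = 0, m + e * Num.conj l = 0,
                       l + e * Num.conj l != 0 & m + e * Num.conj m != 0].
Proof.
have conjN (z : CC) : Num.conj (- z) = - Num.conj z by exact: rmorphN.
have two_neq0 (z : CC) : z != 0 -> z + z != 0.
  by move=> z0; rewrite -mulr2n mulrn_eq0 negb_or z0.
case=> ->; [exists 1, (-1) | exists 'i, (-'i)];
  rewrite ?mul1r ?mulN1r !conjN ?conjC1 ?conjCi ?opprK;
  split; rewrite ?subrr ?addNr -?opprD ?oppr_eq0 ?two_neq0 ?oner_eq0 ?neq0Ci //.
Qed.

Lemma negb_eq_self (i : bool) : (~~ i == i) = false. Proof. by case: i. Qed.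
Lemma neq_negb (i k : bool) : k != i -> k = ~~ i. Proof. by case: i; case: k. Qed.

(* The complementary idempotents are indexed by booleans,
   E true = P and E false = 1 - P, and pproj i j u := (E i u) E j is the
   projection onto the Peirce space A_ij. *)
Section Peirce.
Variables (V : lmodType CC) (mul : V -> V -> V) (star : V -> V) (one P : V).
Hypothesis hbil : bilinear_mul mul.
Hypothesis halt : alternative_mul mul.
Hypothesis hinv : is_involution mul star.
Hypothesis hone : is_unit mul one.
Hypothesis hPs : star P = P.
Hypothesis hPP : mul P P = P.

(* Alternative algebras are flexible; this lets E i u E j be parenthesised
   either way. *)
Lemma flexible x y : mul (mul x y) x = mul x (mul y x).
Proof.
have := halt.2 (y + x) x.
rewrite !(bmulDl hbil) !(bmulDr hbil) !(bmulDl hbil) (halt.2 y x) (halt.2 x x).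
by rewrite (halt.1 x y) -!addrA => /addrI; rewrite [RHS]addrCA => /addrI /addIr.
Qed.

Definition E (i : bool) : V := if i then P else one - P.

Lemma E_negb i : E (~~ i) = one - E i.
Proof. by case: i => //=; rewrite opprB addrC subrK. Qed.

Lemma E_idem i : mul (E i) (E i) = E i.
Proof.
case: i => //=.
by rewrite (bmulBl hbil) (hone _).1 !(bmulBr hbil) (hone P).2 hPP subrr subr0.
Qed.

Lemma E_star i : star (E i) = E i.
Proof.
have star_one : star one = one.
  by rewrite -[RHS](starK hinv) -(hone (star one)).2 (starM hinv) (starK hinv).
by case: i => //=; rewrite (starD hinv) (starN hinv) star_one hPs.
Qed.

Lemma mulE_left i k u :
  mul (E i) (mul (E k) u) = if k == i then mul (E i) u else 0.
Proof.
have Ei_absorb : mul (E i) (mul (E i) u) = mul (E i) u by rewrite -halt.1 E_idem.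
case: (boolP (k == i)) => [/eqP -> // | ki].
by rewrite (neq_negb ki) E_negb (bmulBl hbil) (hone u).1 (bmulBr hbil) Ei_absorb subrr.
Qed.

Lemma mulE_right j k u :
  mul (mul u (E k)) (E j) = if k == j then mul u (E j) else 0.
Proof.
have Ej_absorb : mul (mul u (E j)) (E j) = mul u (E j) by rewrite halt.2 E_idem.
case: (boolP (k == j)) => [/eqP -> // | kj].
by rewrite (neq_negb kj) E_negb (bmulBr hbil) (hone u).2 (bmulBl hbil) Ej_absorb subrr.
Qed.

Lemma mulE_assoc i j u : mul (E i) (mul u (E j)) = mul (mul (E i) u) (E j).
Proof.
case: (boolP (j == i)) => [/eqP -> | /neq_negb ->]; first by rewrite flexible.
by rewrite E_negb !(bmulBr hbil) (hone u).2 (hone (mul (E i) u)).2 flexible.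
Qed.

Definition pproj (i j : bool) (u : V) : V := mul (mul (E i) u) (E j).

Lemma pprojD i j u v : pproj i j (u + v) = pproj i j u + pproj i j v.
Proof. by rewrite /pproj (bmulDr hbil) (bmulDl hbil). Qed.

Lemma pprojZ i j k u : pproj i j (k *: u) = k *: pproj i j u.
Proof. by rewrite /pproj (bmulZr hbil) (bmulZl hbil). Qed.

Lemma pproj0 i j : pproj i j 0 = 0.
Proof. by rewrite /pproj (bmul0r hbil) (bmul0l hbil). Qed.

Lemma pproj_mulEl i j k u :
  pproj i j (mul (E k) u) = if k == i then pproj i j u else 0.
Proof. by rewrite /pproj mulE_left; case: ifP => // _; rewrite (bmul0l hbil). Qed.

Lemma pproj_mulEr i j k u :
  pproj i j (mul u (E k)) = if k == j then pproj i j u else 0.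
Proof. by rewrite /pproj mulE_assoc mulE_right. Qed.

Lemma pproj_star i j u : pproj i j (star u) = star (pproj j i u).
Proof. by rewrite /pproj !(starM hinv) !E_star mulE_assoc. Qed.

Lemma pproj_idem i j u : pproj i j (pproj i j u) = pproj i j u.
Proof. by rewrite [X in pproj i j X]/pproj pproj_mulEr eqxx pproj_mulEl eqxx. Qed.

Lemma peirce_decomp i u :
  u = pproj i i u + pproj i (~~ i) u + pproj (~~ i) i u + pproj (~~ i) (~~ i) u.
Proof.
have unit_u : u = mul (mul one u) one by rewrite (hone u).1 (hone u).2.
have sumE : E i + E (~~ i) = one by rewrite E_negb addrC subrK.
by rewrite {1}unit_u -sumE !(bmulDl hbil) !(bmulDr hbil) !addrA.
Qed.

Section PeirceSpace.
Variables (i j : bool) (w : V).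
Hypothesis hw : pproj i j w = w.

Lemma mem_mulEl k : mul (E k) w = if k == i then w else 0.
Proof.
rewrite -{1}hw /pproj mulE_assoc mulE_left eq_sym.
by case: ifP => [/eqP -> | _]; rewrite ?(bmul0l hbil).
Qed.

Lemma mem_mulEr k : mul w (E k) = if k == j then w else 0.
Proof. by rewrite -{1}hw /pproj mulE_right eq_sym; case: ifP => [/eqP ->|]. Qed.

Lemma mem_star : pproj j i (star w) = star w.
Proof. by rewrite pproj_star hw. Qed.

Lemma mem_pproj k l : pproj k l w = if (k == i) && (l == j) then w else 0.
Proof.
rewrite -{1}hw [X in pproj k l X]/pproj pproj_mulEr pproj_mulEl.
by case: (j =P l) => [<-|/eqP/negbTE jl]; case: (i =P k) => [<-|/eqP/negbTE ik];
  rewrite ?eqxx ?hw // ?(eq_sym l) ?jl ?(eq_sym k) ?ik ?andbF.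
Qed.
End PeirceSpace.

Section Additivity.
Variables (W : lmodType CC) (mulB : W -> W -> W) (starB : W -> W).
Hypothesis hbilB : bilinear_mul mulB.
Hypothesis hinvB : is_involution mulB starB.
Variables (Phi : V -> W) (Phi_inv : W -> V).
Hypothesis PhiK : cancel Phi Phi_inv.
Hypothesis Phi_invK : cancel Phi_inv Phi.
Variable e : CC.
Hypothesis he : e = 1 \/ e = -1.
Local Notation tpA := (tprod mul star e).
Local Notation tpB := (tprod mulB starB e).
Hypothesis hpres : forall a b, Phi (tpA a b) = tpB (Phi a) (Phi b).

Let Phi_inj : injective Phi := can_inj PhiK.

(* Phi 0 = 0 because 0 = x o 0 and Phi x o 0 = 0 in B. *)
Lemma Phi0 : Phi 0 = 0.
Proof.
have tp0 : tpA (Phi_inv 0) 0 = 0 by exact: tprod0r.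
by rewrite -{1}tp0 hpres Phi_invK (tprod0l e hbilB hinvB).
Qed.

(* A relation Phi t = Phi u + Phi v + Phi w survives multiplication by any
   x on either side; this is how information about t is extracted. *)
Lemma Phi_sum3_tprodl t u v w x : Phi t = Phi u + Phi v + Phi w ->
  Phi (tpA t x) = Phi (tpA u x) + Phi (tpA v x) + Phi (tpA w x).
Proof. by move=> ht; rewrite !hpres ht !(tprodDl e hbilB hinvB). Qed.

Lemma Phi_sum3_tprodr t u v w x : Phi t = Phi u + Phi v + Phi w ->
  Phi (tpA x t) = Phi (tpA x u) + Phi (tpA x v) + Phi (tpA x w).
Proof. by move=> ht; rewrite !hpres ht !(tprodDr starB e hbilB). Qed.

Definition diag_elt (i : bool) (l m : CC) : V := l *: E i + m *: E (~~ i).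

Definition diag_coef (i : bool) (l m : CC) (k : bool) : CC :=
  if k == i then l else m.

Lemma tprod_diag_mem i k q l m w : pproj k q w = w ->
  tpA (diag_elt i l m) w =
  (diag_coef i l m k + e * Num.conj (diag_coef i l m q)) *: w.
Proof.
move=> hw; rewrite /tprod /diag_elt /diag_coef (starD hinv) !(starZ hinv) !E_star.
rewrite (bmulDl hbil) !(bmulZl hbil) (bmulDr hbil) !(bmulZr hbil).
rewrite !(mem_mulEl hw) !(mem_mulEr hw) {hw}.
by case: i; case: k; case: q; rewrite /= ?scaler0 ?addr0 ?add0r scalerDl scalerA.
Qed.

Lemma pproj_tprod_diag i p q l m u :
  pproj p q (tpA (diag_elt i l m) u) =
  (diag_coef i l m p + e * Num.conj (diag_coef i l m q)) *: pproj p q u.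
Proof.
rewrite /tprod /diag_elt /diag_coef (starD hinv) !(starZ hinv) !E_star.
rewrite (bmulDl hbil) !(bmulZl hbil) (bmulDr hbil) !(bmulZr hbil).
rewrite !pprojD !pprojZ !pprojD !pprojZ !pproj_mulEl !pproj_mulEr.
by case: i; case: p; case: q; rewrite /= ?scaler0 ?addr0 ?add0r scalerDl scalerA.
Qed.

Lemma pproj_tprodEr p q k u : pproj p q (tpA u (E k)) =
  (if k == q then pproj p q u else 0) + e *: (if k == p then star (pproj q p u) else 0).
Proof. by rewrite /tprod pprojD pprojZ pproj_mulEr pproj_mulEl pproj_star. Qed.

Lemma pproj_tprodEl p q k u : pproj p q (tpA (E k) u) =
  (if k == p then pproj p q u else 0) + e *: (if k == q then pproj p q u else 0).
Proof. by rewrite /tprod E_star pprojD pprojZ pproj_mulEl pproj_mulEr. Qed.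

Lemma tprod_memEr p q k w : pproj p q w = w ->
  tpA w (E k) = if k == q then w + e *: star w else 0.
Proof.
move=> hw; rewrite /tprod (mem_mulEr hw) (mem_mulEl (mem_star hw)).
by case: ifP; rewrite ?scaler0 ?addr0.
Qed.

Lemma tprod_Emem p q k w : pproj p q w = w ->
  tpA (E k) w = (if k == p then w else 0) + e *: (if k == q then w else 0).
Proof. by move=> hw; rewrite /tprod E_star (mem_mulEl hw) (mem_mulEr hw). Qed.

Lemma offdiag_component i t a b d :
  pproj i i a = a -> pproj i (~~ i) b = b -> pproj (~~ i) i d = d ->
  Phi t = Phi a + Phi b + Phi d -> pproj i (~~ i) t = b.
Proof.
move=> ha hb hd ht.
have test : tpA t (E (~~ i)) = tpA b (E (~~ i)).
  apply: Phi_inj; rewrite (Phi_sum3_tprodl (E (~~ i)) ht).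
  by rewrite (tprod_memEr _ ha) (tprod_memEr _ hb) (tprod_memEr _ hd) negb_eq_self eqxx
    Phi0 addr0 add0r.
have := congr1 (pproj i (~~ i)) test.
by rewrite !pproj_tprodEr eqxx negb_eq_self scaler0 !addr0 hb.
Qed.

Lemma diag_components i t a b d :
  pproj i i a = a -> pproj i (~~ i) b = b -> pproj (~~ i) i d = d ->
  Phi t = Phi a + Phi b + Phi d ->
  pproj i i t = a /\ pproj (~~ i) (~~ i) t = 0.
Proof.
move=> ha hb hd ht.
have [l [m [lm ml ll mm]]] := separating_scalars he.
have test : tpA (diag_elt i l m) t = (l + e * Num.conj l) *: a.
  apply: Phi_inj; rewrite (Phi_sum3_tprodr _ ht).
  rewrite (tprod_diag_mem _ _ _ ha) (tprod_diag_mem _ _ _ hb) (tprod_diag_mem _ _ _ hd).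
  by rewrite /diag_coef eqxx negb_eq_self lm ml !scale0r Phi0 !addr0.
split.
  have := congr1 (pproj i i) test.
  by rewrite pproj_tprod_diag /diag_coef eqxx pprojZ ha; exact: scalerI.
have := congr1 (pproj (~~ i) (~~ i)) test.
rewrite pproj_tprod_diag /diag_coef negb_eq_self pprojZ (mem_pproj ha) negb_eq_self.
by rewrite /= scaler0 => /eqP; rewrite scaler_eq0 (negbTE mm) => /eqP.
Qed.

(* Phi is additive on A_i(~i) + A_(~i)i: the lower component of t is found
   by the upper-component argument with the roles of i and ~i exchanged. *)
Lemma Phi_add_offdiag i b d : pproj i (~~ i) b = b -> pproj (~~ i) i d = d ->
  Phi (b + d) = Phi b + Phi d.
Proof.
move=> hb hd.
set t := Phi_inv (Phi b + Phi d).
have ht : Phi t = Phi 0 + Phi b + Phi d by rewrite Phi_invK Phi0 add0r.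
have [tii tjj] := diag_components (pproj0 i i) hb hd ht.
have tij := offdiag_component (pproj0 i i) hb hd ht.
have tji : pproj (~~ i) i t = d.
  have := @offdiag_component (~~ i) t 0 d b (pproj0 _ _); rewrite negbK.
  by apply=> //; rewrite ht addrAC.
have -> : b + d = t by rewrite (peirce_decomp i t) tii tij tji tjj addr0 add0r.
exact: Phi_invK.
Qed.

Lemma lower_component i t a b d :
  pproj i i a = a -> pproj i (~~ i) b = b -> pproj (~~ i) i d = d ->
  Phi t = Phi a + Phi b + Phi d -> pproj (~~ i) i t = d.
Proof.
move=> ha hb hd ht.
have test : tpA (E (~~ i)) t = e *: b + d.
  apply: Phi_inj; rewrite (Phi_sum3_tprodr _ ht).
  rewrite (tprod_Emem _ ha) (tprod_Emem _ hb) (tprod_Emem _ hd) eqxx negb_eq_self.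
  rewrite !scaler0 !addr0 add0r Phi0 add0r (Phi_add_offdiag (i := i)) //.
  by rewrite pprojZ hb.
have := congr1 (pproj (~~ i) i) test.
rewrite pproj_tprodEl eqxx negb_eq_self scaler0 addr0 pprojD pprojZ hd.
by rewrite (mem_pproj hb) negb_eq_self /= scaler0 add0r.
Qed.

Lemma Phi_add3 i a b d :
  pproj i i a = a -> pproj i (~~ i) b = b -> pproj (~~ i) i d = d ->
  Phi (a + b + d) = Phi a + Phi b + Phi d.
Proof.
move=> ha hb hd.
set t := Phi_inv (Phi a + Phi b + Phi d).
have ht : Phi t = Phi a + Phi b + Phi d by rewrite Phi_invK.
have [tii tjj] := diag_components ha hb hd ht.
have -> : a + b + d = t.
  by rewrite (peirce_decomp i t) tii tjj (offdiag_component ha hb hd ht)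
    (lower_component ha hb hd ht) addr0.
exact: Phi_invK.
Qed.
End Additivity.
End Peirce.

Theorem claim2p3 (A B : lmodType CC)
    (mulA : A -> A -> A) (starA : A -> A) (nrmA : A -> CC) (oneA : A)
    (mulB : B -> B -> B) (starB : B -> B)
    (hA : alt_Wstar_factor mulA starA nrmA oneA)
    (hB : alt_star_algebra mulB starB)
    (Phi : A -> B) (hbij : bijective Phi)
    (hpres : preserves_plus mulA starA mulB starB Phi \/
             preserves_minus mulA starA mulB starB Phi)
    (p1 : A) (hp1 : is_projection mulA starA p1) (hp1ne : p1 <> oneA) :
  let p2 := oneA - p1 in
  forall a11 b12 c21 d22 : A,
    peirce mulA p1 p1 a11 -> peirce mulA p1 p2 b12 ->
    peirce mulA p2 p1 c21 -> peirce mulA p2 p2 d22 ->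
    Phi (a11 + b12 + c21) = Phi a11 + Phi b12 + Phi c21 /\
    Phi (b12 + c21 + d22) = Phi b12 + Phi c21 + Phi d22.
Proof.
move=> p2 a11 b12 c21 d22 [x11 ->] [x12 ->] [x21 ->] [x22 ->].
case: hA => [[[hbil halt hinv] _ _ _ _] _ _ hone].
case: hB => [hbilB _ hinvB].
case: hbij => Phi_inv PhiK Phi_invK.
case: hp1 => _ hPs hPP.
have [e he hpresE] := preserves_tprod hpres.
have add3 := Phi_add3 hbil halt hinv hone hPs hPP hbilB hinvB PhiK Phi_invK he hpresE.
(* With E true = p1 and E false = p2, the Peirce components are
   pproj-fixed; (ii) is the case i = false, up to reordering the sum. *)
have fixed i j x := pproj_idem hbil halt hone hPP i j x.
split; first exact: add3 true _ _ _ (fixed _ _ x11) (fixed _ _ x12) (fixed _ _ x21).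
have := add3 false _ _ _ (fixed _ _ x22) (fixed _ _ x21) (fixed _ _ x12).
rewrite /pproj /E /= -/p2 => h.
have rev3 (T : zmodType) (x y z : T) : x + y + z = z + y + x.
  by rewrite addrC (addrC x) addrA.
by rewrite rev3 h rev3.
Qed.
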